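(* Let $\mathcal{A}$ be a collection of hyperplanes in $Q = S_1\times\cdots\times S_n$, no two of which are parallel, let $0\le a\le n$, let $\mathbb{P}_a$ be a probability measure on $Q_a$, let $\delta_{a+1},\dots,\delta_n \in [0,1/2]$, and let $\mathbb{P}_k$, $\alpha_k$, $c_k$ be defined as in the context. Then for each $a < k \le n$, $$M_k^{(1)} \le \frac{c_{k-1}(1)}{|S_k|} \qquad\text{and}\qquad M_k^{(2)} \le \frac{c_{k-1}(3)}{|S_k|^2}.$$ Moreover, if in addition $|S_j| \ge 3$ for each $j\in[n]$, and no hyperplane $A_F$ with $F \in \mathcal{N}_k$ has $|F| = 1$, then $$M_k^{(2)} \le \frac{1}{|S_k|^2}\big(c_{k-1}(3) - 2c_{k-1}(1) + 1\big).$$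
   Context: $S_1,\dots,S_n$ are finite sets each with at least two elements; $Q = S_1\times\cdots\times S_n$ and $Q_k = S_1\times\cdots\times S_k$. A hyperplane is $A = A_1\times\cdots\times A_n\subseteq Q$ with each $A_k$ either $S_k$ or a singleton in $S_k$; $F(A)=\{k: A_k\text{ is a singleton}\}$ is its set of fixed coordinates; hyperplanes are parallel if they have the same $F$. Hyperplanes in $\mathcal{A}$ have non-empty $F(A)$; since no two are parallel, write $\mathcal{A}=\{A_F : F\in\mathcal{F}\}$ with $\mathcal{F}=\{F(A):A\in\mathcal{A}\}$. A set $X\subseteq Q_k$ is identified with $X\times S_{k+1}\times\cdots\times S_n\subseteq Q$ (such sets are called $Q_k$-measurable); a hyperplane with $F(A)\subseteq[k]$ is viewed as a subset of $Q_k$. Let $\mathcal{F}_k=\{F\in\mathcal{F}: F\subseteq[k]\}$, $\mathcal{N}_k = \mathcal{F}_k\setminus\mathcal{F}_{k-1}$ and $B_k = \bigcup_{F\in\mathcal{N}_k} A_F\subseteq Q_k$. Measures: given $\mathbb{P}_{k-1}$ on $Q_{k-1}$ ($k>a$), for $x\in Q_{k-1}$ let $\alpha_k(x) = |\{y\in S_k : (x,y)\in B_k\}|/|S_k|$, and for $x\in Q_{k-1}, y\in S_k$ set $\mathbb{P}_k(x,y) = \max\{0, \frac{\alpha_k(x)-\delta_k}{\alpha_k(x)(1-\delta_k)}\}\cdot \frac{\mathbb{P}_{k-1}(x)}{|S_k|}$ if $(x,y)\in B_k$, and $\mathbb{P}_k(x,y)=\min\{\frac{1}{1-\alpha_k(x)},\frac{1}{1-\delta_k}\}\cdot\frac{\mathbb{P}_{k-1}(x)}{|S_k|}$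 otherwise. Let $\mathbb{E}_{k-1}$ denote expectation over $x\sim\mathbb{P}_{k-1}$, and $M_k^{(1)}=\mathbb{E}_{k-1}[\alpha_k(x)]$, $M_k^{(2)}=\mathbb{E}_{k-1}[\alpha_k(x)^2]$. For $I\subseteq[a]$, $c(I)=\max\{\mathbb{P}_a(H): H \text{ a hyperplane in } Q_a \text{ with } F(H)=I\}$ (so $c(\emptyset)=1$); for $J\subseteq[a+1,n]$, $\nu(J)=\prod_{j\in J}\frac{1}{(1-\delta_j)|S_j|}$; and for $k\ge a$, $c_k(x) = \sum_{I\subseteq[a]}c(I)x^{|I|}\prod_{j=a+1}^k\big(1+\frac{x}{(1-\delta_j)|S_j|}\big)$. *)

(* Conventions:
   - the finite sets S_1..S_n are subsets [S j] (j = 1..n) of a common finite type T;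
   - a point of Q_k is a sequence x of length k with x_i (0-based position i) in S (i+1);
   - a hyperplane in Q_m is an m-tuple of [option T]: [None] at position i means the
     factor S_(i+1), [Some y] means the singleton {y}; position i <-> coordinate i+1. *)
From HB Require Import structures.
From mathcomp Require Import all_boot all_order all_algebra.
Set Implicit Arguments.
Unset Strict Implicit.
Unset Printing Implicit Defensive.
Import Order.TTheory GRing.Theory Num.Theory.
Local Open Scope ring_scope.

Section Defs.
Variable T : finType.
Variable S : nat -> {set T}.

Definition inQ (k : nat) (x : seq T) : bool :=
  (size x == k) && all (fun p => p.2 \in S p.1) (zip (iota 1 k) x).

Definition isHyp (m : nat) (H : m.-tuple (option T)) : bool :=
  [forall i : 'I_m, if tnth H i is Some y then y \in S i.+1 else true].

(* F(H), as a set of positions (position i <-> coordinate i+1) *)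
Definition Fix (m : nat) (H : m.-tuple (option T)) : {set 'I_m} :=
  [set i | tnth H i != None].

Definition subk (m : nat) (F : {set 'I_m}) (k : nat) : bool :=
  [forall i in F, (i < k)%N].

(* the point x (of some Q_k with F(H) \subseteq [k]) lies in H *)
Definition inHyp (m : nat) (H : m.-tuple (option T)) (x : seq T) : bool :=
  [forall i : 'I_m, if tnth H i is Some y then onth x i == Some y else true].

Variable n : nat.
Variable Acal : {set n.-tuple (option T)}.

Definition newk (k : nat) (A : n.-tuple (option T)) : bool :=
  subk (Fix A) k && ~~ subk (Fix A) k.-1.

Definition inB (k : nat) (z : seq T) : bool :=
  [exists A in Acal, newk k A && inHyp A z].

Variable R : realFieldType.

Definition alpha (k : nat) (x : seq T) : R :=
  #|[set y in S k | inB k (rcons x y)]|%:R / #|S k|%:R.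

Variable delta : nat -> R.

(* P_k(x,y) = weight k x y * P_(k-1)(x) *)
Definition weight (k : nat) (x : seq T) (y : T) : R :=
  if inB k (rcons x y) then
    Num.max 0 ((alpha k x - delta k) / (alpha k x * (1 - delta k))) / #|S k|%:R
  else
    Num.min (1 / (1 - alpha k x)) (1 / (1 - delta k)) / #|S k|%:R.

Variable a : nat.
Variable Pa : seq T -> R.

Fixpoint Paux (m : nat) (s : seq T) : R :=
  match m with
  | 0 => Pa s
  | m'.+1 =>
    match s with
    | [::] => 0
    | y :: s' => weight (size s) (belast y s') (last y s') * Paux m' (belast y s')
    end
  end.

Definition Pk (k : nat) (x : seq T) : R := Paux (k - a) x.

Definition M1 (k : nat) : R :=
  \sum_(x : (k.-1).-tuple T | inQ k.-1 x) Pk k.-1 x * alpha k x.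
Definition M2 (k : nat) : R :=
  \sum_(x : (k.-1).-tuple T | inQ k.-1 x) Pk k.-1 x * (alpha k x) ^+ 2.

Definition PaH (H : a.-tuple (option T)) : R :=
  \sum_(x : a.-tuple T | inQ a x && inHyp H x) Pa x.

Definition cI (I : {set 'I_a}) : R :=
  \big[Num.max/0]_(H : a.-tuple (option T) | isHyp H && (Fix H == I)) PaH H.

Definition ck (k : nat) (x : R) : R :=
  \sum_(I : {set 'I_a}) cI I * x ^+ #|I| *
     \prod_(a.+1 <= j < k.+1) (1 + x / ((1 - delta j) * #|S j|%:R)).

End Defs.

(* Write k = d + a + 1.  A point (x, y) of B_k lies in some A_F with F in N_k, and
   since k is in F the value y is fixed by A_F; so |S_k| alpha_k(x) is at most the
   number of F in N_k whose hyperplane, restricted to the first k - 1 coordinates,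
   contains x, and |S_k|^2 alpha_k(x)^2 is at most the number of pairs (F, G) whose
   restricted hyperplanes both contain x, i.e. whose intersection contains x.
   Relative to P_(j-1), the measure P_j puts mass at most
   nu_j = 1 / ((1 - delta_j) |S_j|) on each value of coordinate j and at most 1 on
   all of S_j, so a hyperplane of Q_(k-1) fixing I (in [a]) and J (in (a, k)) has
   mass at most c(I) prod_(j in J) nu_j.  As F in N_k is determined by F minus k,
   summing over F gives at most sum_(I, J) c(I) prod_J nu_j = c_(k-1)(1); summing over
   pairs, and using that a set is the union of two subsets in 3^|I| ways, gives
   c_(k-1)(3).  If no F in N_k is a singleton, the pairs involving the empty key
   disappear, which by inclusion-exclusion removes 2 c_(k-1)(1) - c(emptyset), and
   c(emptyset) <= 1. *)

From Pilot Require Import Defs.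
From HB Require Import structures.
From mathcomp Require Import all_boot all_order all_algebra.
From mathcomp Require Import ring.
Import Order.TTheory GRing.Theory Num.Theory.
Local Open Scope ring_scope.
Set Implicit Arguments.
Unset Strict Implicit.

Lemma sum_tuple_rcons (V : nmodType) (T : finType) m (F : seq T -> V) :
  \sum_(t : m.+1.-tuple T) F t = \sum_(t : m.-tuple T) \sum_(y : T) F (rcons t y).
Proof.
rewrite pair_bigA /=.
pose g (t : m.+1.-tuple T) := ([tuple of belast (thead t) (behead t)], last (thead t) (behead t)).
rewrite (reindex (fun p : m.-tuple T * T => [tuple of rcons p.1 p.2])) //=.
exists g => [[t y]|t] _; rewrite /g.
  by case: t => -[|z s] ? /=; congr pair; rewrite ?last_rcons //;
    apply: val_inj; rewrite /= ?belast_rcons.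
by apply: val_inj; rewrite /= [t in RHS]tuple_eta /= -lastI.
Qed.

Lemma sumr_le_inj (R : numDomainType) (I J : finType) (P : pred I) (Q : pred J)
    (f : I -> J) (F : J -> R) :
  {in P &, injective f} -> (forall i, P i -> Q (f i)) -> (forall j, Q j -> 0 <= F j) ->
  \sum_(i | P i) F (f i) <= \sum_(j | Q j) F j.
Proof.
move=> f_inj PQ F_ge0; rewrite -(big_imset _ f_inj) [leRHS](bigID [in f @: P]) /=.
rewrite -[leLHS]addr0 lerD //; last by rewrite sumr_ge0 // => j /andP[/F_ge0].
rewrite le_eqVlt; apply/orP; left; apply/eqP/eq_bigl => j.
by apply/idP/andP => [fPj|[]//]; split=> //; case/imsetP: fPj => i /PQ + ->.
Qed.

Lemma sumr_le_sub (R : numDomainType) (I : finType) (P Q : pred I) (F : I -> R) :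
  (forall i, P i -> Q i) -> (forall i, Q i -> 0 <= F i) ->
  \sum_(i | P i) F i <= \sum_(i | Q i) F i.
Proof. by move=> PQ F_ge0; apply: (sumr_le_inj (f := id)). Qed.

Section SubsetSums.
Variables (R : comPzSemiRingType) (X : finType).

Lemma sum_subsets_prodb (G : X -> bool -> R) :
  \sum_(J : {set X}) \prod_i G i (i \in J) = \prod_i (G i true + G i false).
Proof.
rewrite bigA_distr; apply: eq_big => [J|J _]; first by rewrite inE.
by apply: eq_bigr => i _; case: (i \in J).
Qed.

Lemma sum_subsets_prod (F : X -> R) :
  \sum_(J : {set X}) \prod_(i in J) F i = \prod_i (1 + F i).
Proof.
rewrite (eq_bigr _ (fun i _ => addrC _ _)).
rewrite -(sum_subsets_prodb (fun i (b : bool) => if b then F i else 1)).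
by apply: eq_bigr => J _; rewrite big_mkcond.
Qed.

Lemma sum_setU_pairs (F : {set X} -> R) :
  \sum_(I1 : {set X}) \sum_(I2 : {set X}) F (I1 :|: I2) = \sum_(I : {set X}) F I *+ 3 ^ #|I|.
Proof.
(* Each element of I lies in I1 only, in I2 only, or in both. *)
have num_setU_eq I :
    \sum_(I1 : {set X}) \sum_(I2 : {set X}) (I1 :|: I2 == I)%:R = (3 ^ #|I|)%:R :> R.
  pose G i b1 b2 : R := ((b1 || b2) == (i \in I))%:R.
  transitivity (\sum_(I1 : {set X}) \sum_(I2 : {set X}) \prod_i G i (i \in I1) (i \in I2)).
    apply: eq_bigr => I1 _; apply: eq_bigr => I2 _.
    have [eqI|neqI] := eqVneq (I1 :|: I2) I.
      by rewrite big1 // => i _; rewrite /G -eqI inE eqxx.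
    have [i Ii] : exists i, (i \in I1 :|: I2) != (i \in I).
      by apply/existsP; apply: contraR neqI => /existsPn eqI; apply/eqP/setP => i; exact/eqP/negPn.
    by rewrite (bigD1 i) //= /G -in_setU (negPf Ii) mul0r.
  under eq_bigr => I1 _ do rewrite (sum_subsets_prodb (fun i => G i (i \in I1))).
  rewrite (sum_subsets_prodb (fun i b1 => G i b1 true + G i b1 false)) natrX.
  rewrite -prodr_const [RHS]big_mkcond /=; apply: eq_bigr => i _.
  by rewrite /G; case: (i \in I) => /=; rewrite ?addr0 ?add0r // -!mulr2n -mulrSr.
under [RHS]eq_bigr => I _ do rewrite -mulr_natl -num_setU_eq mulr_suml.
rewrite [RHS]exchange_big; apply: eq_bigr => I1 _.
under [RHS]eq_bigr => I _ do rewrite mulr_suml.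
rewrite [RHS]exchange_big; apply: eq_bigr => I2 _.
rewrite (bigD1 (I1 :|: I2)) //= eqxx mul1r big1 ?addr0 // => I.
by rewrite eq_sym => /negPf->; rewrite mul0r.
Qed.

End SubsetSums.

Lemma sum_pairs_nonunit (V : zmodType) (X : finType) (e : X) (op : X -> X -> X)
    (F : X -> V) :
  left_id e op -> right_id e op ->
  \sum_(x | x != e) \sum_(y | y != e) F (op x y) =
  \sum_x \sum_y F (op x y) - (\sum_x F x) *+ 2 + F e.
Proof.
move=> op0x opx0; set W := \sum_(x | x != e) _.
have -> : \sum_x \sum_y F (op x y) = \sum_x F x + \sum_x \sum_(y | y != e) F (op x y).
  by rewrite -big_split; apply: eq_bigr => x _; rewrite (bigD1 e) //= opx0.
have -> : \sum_x \sum_(y | y != e) F (op x y) = \sum_(y | y != e) F y + W.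
  by rewrite (bigD1 e) //=; under eq_bigr => y _ do rewrite op0x.
rewrite (bigD1 e) //= mulr2n; set s := \sum_(i | i != e) F i.
by rewrite [_ + (s + W)]addrC addrKA [s + W]addrC [F e + s]addrC addrKA subrK.
Qed.

Section KeySums.
Variables (R : comPzSemiRingType) (X Y : finType) (c : {set X} -> R) (w : Y -> R).

(* Keys (I, J) index the terms c(I) prod_(j in J) w_j of c_k: see [ck1E], [ck3E]. *)
Definition keyw (K : {set X} * {set Y}) : R := c K.1 * \prod_(j in K.2) w j.

Definition keyU (K1 K2 : {set X} * {set Y}) : {set X} * {set Y} :=
  (K1.1 :|: K2.1, K1.2 :|: K2.2).

Let sum_pair (G : {set X} * {set Y} -> R) :
  \sum_K G K = \sum_(I : {set X}) \sum_(J : {set Y}) G (I, J).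
Proof. by rewrite pair_bigA; apply: eq_bigr => -[]. Qed.

Lemma sum_keyw : \sum_K keyw K = \sum_I c I * \prod_j (1 + w j).
Proof.
by rewrite sum_pair; apply: eq_bigr => I _; rewrite -sum_subsets_prod mulr_sumr.
Qed.

Lemma sum_keyw_keyU :
  \sum_K1 \sum_K2 keyw (keyU K1 K2) = \sum_I c I * 3 ^+ #|I| * \prod_j (1 + 3 * w j).
Proof.
have sum_prod_setU : \sum_(J1 : {set Y}) \sum_(J2 : {set Y}) \prod_(j in J1 :|: J2) w j =
    \prod_j (1 + 3 * w j).
  rewrite (sum_setU_pairs (fun J => \prod_(j in J) w j)) -sum_subsets_prod; apply: eq_bigr => J _.
  by rewrite big_split /= prodr_const -[LHS]mulr_natl natrX.
rewrite sum_pair.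
under [LHS]eq_bigr => I1 _ do under eq_bigr => J1 _ do rewrite sum_pair.
under [LHS]eq_bigr => I1 _ do rewrite exchange_big.
rewrite /keyw /=.
under [LHS]eq_bigr => I1 _ do under eq_bigr => I2 _ do under eq_bigr => J1 _ do
  rewrite -mulr_sumr.
under [LHS]eq_bigr => I1 _ do under eq_bigr => I2 _ do rewrite -mulr_sumr sum_prod_setU.
under [LHS]eq_bigr => I1 _ do rewrite -mulr_suml.
rewrite -mulr_suml (sum_setU_pairs c) -[RHS]mulr_suml.
by congr (_ * _); apply: eq_bigr => I _; rewrite -[LHS]mulr_natr natrX.
Qed.

End KeySums.

Section Patterns.
Variable T : finType.
Implicit Types (p q : nat -> option T) (x : seq T).

(* A pattern is a hyperplane read by position, [None] marking a free coordinate;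
   [matches p x] says that x lies in its restriction to the first [size x]
   coordinates. *)
Definition matches p x : bool :=
  all (fun i => if p i is Some z then nth z x i == z else true) (iota 0 (size x)).

Lemma matches_rcons p x y :
  matches p (rcons x y) = matches p x && (if p (size x) is Some z then y == z else true).
Proof.
rewrite /matches size_rcons -addn1 iotaD all_cat /= andbT add0n.
congr andb; last by case: (p (size x)) => // z; rewrite nth_rcons ltnn eqxx.
apply: eq_in_all => i; rewrite mem_iota add0n => /andP[_ ix].
by case: (p i) => // z; rewrite nth_rcons ix.
Qed.

Definition pjoin p q : nat -> option T := fun i => if p i is Some z then Some z else q i.

Lemma matches_pjoin p q x : matches p x -> matches q x -> matches (pjoin p q) x.
Proof.
move=> /allP px /allP qx; apply/allP => i ix; move: (px i ix) (qx i ix).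
by rewrite /pjoin; case: (p i).
Qed.

Lemma onth_nth x i z : (i < size x)%N -> onth x i = Some (nth z x i).
Proof. by elim: x i => [|y x IH] [|i] //= /IH. Qed.

Lemma inHyp_matches n (A : n.-tuple (option T)) x : inHyp A x -> matches (nth None A) x.
Proof.
move=> /forallP Ax; apply/allP => i; rewrite mem_iota add0n => /andP[_ ix].
case Ai: (nth None A i) => [z|] //.
have iA : (i < n)%N.
  by rewrite ltnNge; apply/negP => ni; move: Ai; rewrite nth_default ?size_tuple.
by move: (Ax (Ordinal iA)); rewrite (tnth_nth None) /= Ai (onth_nth z ix) => /eqP[->].
Qed.

Variables a d : nat.

Definition pkey p : {set 'I_a} * {set 'I_d} :=
  ([set i : 'I_a | p i != None], [set j : 'I_d | p (j + a)%N != None]).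

Lemma pkey_pjoin p q : pkey (pjoin p q) = keyU (pkey p) (pkey q).
Proof. by congr pair; apply/setP => i; rewrite !inE /pjoin; case: (p _). Qed.

Lemma pkey_fixedE p q i : pkey p = pkey q -> (i < d + a)%N -> (p i == None) = (q i == None).
Proof.
move=> /pair_equal_spec[/setP eq1 /setP eq2] id; apply: negb_inj.
have [ia|ai] := ltnP i a; first by move: (eq1 (Ordinal ia)); rewrite !inE.
have ida : (i - a < d)%N by rewrite ltn_subLR // addnC.
by move: (eq2 (Ordinal ida)); rewrite !inE /= subnK.
Qed.

End Patterns.

(* The P_k-mass above x is this expression times P_(k-1)(x); for [al = 0] the
   first case below applies, through the junk value [x / 0 = 0]. *)
Lemma reweight_le1 (R : realFieldType) (al de : R) : 0 <= al <= 1 -> 0 <= de < 1 ->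
  al * Num.max 0 ((al - de) / (al * (1 - de))) +
  (1 - al) * Num.min (1 / (1 - al)) (1 / (1 - de)) <= 1.
Proof.
move=> /andP[al_ge0 al_le1] /andP[de_ge0 de_lt1]; have de1 : 0 < 1 - de by rewrite subr_gt0.
have [al_le_de|de_lt_al] := leP al de.
  rewrite max_l; last by rewrite mulr_le0_ge0 ?subr_le0 // invr_ge0 mulr_ge0 // ltW.
  have al1 : 0 < 1 - al by rewrite subr_gt0 (le_lt_trans al_le_de).
  rewrite mulr0 add0r (le_trans (y := (1 - al) * (1 / (1 - al)))) //.
    by rewrite ler_wpM2l ?ge_min ?lexx // ltW.
  by rewrite div1r divff ?gt_eqF.
have al0 : 0 < al := le_lt_trans de_ge0 de_lt_al.
rewrite max_r; last by rewrite divr_ge0 ?mulr_ge0 // ltW // subr_gt0.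
apply: (le_trans (y := al * ((al - de) / (al * (1 - de))) + (1 - al) * (1 / (1 - de)))).
  by rewrite lerD2l ler_wpM2l ?subr_ge0 // ge_min lexx orbT.
by rewrite le_eqVlt; apply/orP; left; apply/eqP; field; rewrite !gt_eqF.
Qed.

Definition nu (R : numFieldType) (T : finType) (S : nat -> {set T}) (delta : nat -> R)
  (j : nat) : R := ((1 - delta j) * #|S j|%:R)^-1.

Lemma nu_ge0 (R : numFieldType) (T : finType) (S : nat -> {set T}) (delta : nat -> R) j :
  delta j <= 1 -> 0 <= nu S delta j.
Proof. by move=> dj; rewrite invr_ge0 mulr_ge0 ?subr_ge0. Qed.

Section Weight.
Variables (R : realFieldType) (T : finType) (n : nat) (S : nat -> {set T})
  (Acal : {set n.-tuple (option T)}) (delta : nat -> R) (k : nat) (x : seq T).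
Hypotheses (Sk_gt0 : (0 < #|S k|)%N) (delta_k : 0 <= delta k <= 1 / 2).

Local Notation alpha := (alpha S Acal R k x).
Local Notation weight := (weight S Acal delta k x).
Local Notation N := (#|S k|%:R : R).

Let delta_lt1 : delta k < 1.
Proof. by case/andP: delta_k => _ /le_lt_trans; apply; rewrite ltr_pdivrMr ?mul1r ?ltr1n. Qed.

Let N_gt0 : 0 < N. Proof. by rewrite ltr0n. Qed.

Lemma alpha_ge0_le1 : 0 <= alpha <= 1.
Proof.
rewrite divr_ge0 //= ler_pdivrMr // mul1r ler_nat subset_leq_card //.
by apply/subsetP => y; rewrite inE => /andP[].
Qed.

Lemma weight_ge0 y : 0 <= weight y.
Proof.
case/andP: alpha_ge0_le1 => al0 al1.
rewrite /weight; case: ifP => _; rewrite divr_ge0 // ?le_max ?lexx //.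
by rewrite le_min !div1r !invr_ge0 !subr_ge0 al1 ltW.
Qed.

Lemma weight_le_nu y : weight y <= nu S delta k.
Proof.
have -> : nu S delta k = 1 / (1 - delta k) / N by rewrite /nu invfM div1r.
rewrite /Defs.weight; case: ifP => _; rewrite ler_pM2r ?invr_gt0 //; last first.
  by rewrite ge_min lexx orbT.
have delta1 : 0 < 1 - delta k by rewrite subr_gt0.
have inv_delta1_ge0 : 0 <= 1 / (1 - delta k) by rewrite divr_ge0 // ltW.
rewrite ge_max inv_delta1_ge0 /=.
have [->|al_neq0] := eqVneq alpha 0; first by rewrite mul0r invr0 mulr0.
case/andP: alpha_ge0_le1 => al0 _; have al_gt0 : 0 < alpha by rewrite lt_def al_neq0.
rewrite invfM mulrA ler_pM2r ?invr_gt0 // ler_pdivrMr // mul1r.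
by rewrite gerBl; case/andP: delta_k.
Qed.

Lemma sum_weight_le1 : \sum_(y in S k) weight y <= 1.
Proof.
pose b y := inB Acal k (rcons x y).
pose B := [set y in S k | b y]; pose C := [set y in S k | ~~ b y].
pose M := Num.max 0 ((alpha - delta k) / (alpha * (1 - delta k))).
pose m := Num.min (1 / (1 - alpha)) (1 / (1 - delta k)).
have cardBC : (#|B| + #|C|)%N = #|S k|.
  rewrite -(cardsID [set y | b y] (S k)).
  by congr (_ + _)%N; apply: eq_card => y; rewrite !inE andbC.
rewrite (bigID b) /= [X in X + _](eq_bigl [in B]) => [|y]; last by rewrite inE.
rewrite [X in _ + X](eq_bigl [in C]) => [|y]; last by rewrite inE.
rewrite [X in X + _](eq_bigr (fun=> M / N)) => [|y]; last first.
  by rewrite inE /Defs.weight /b => /andP[_ ->].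
rewrite [X in _ + X](eq_bigr (fun=> m / N)) => [|y]; last first.
  by rewrite inE /Defs.weight /b => /andP[_ /negPf->].
have delta_k' : 0 <= delta k < 1 by case/andP: delta_k => -> _.
apply: le_trans (reweight_le1 alpha_ge0_le1 delta_k'); rewrite le_eqVlt; apply/orP; left.
have alphaE : alpha = #|B|%:R / N by [].
rewrite -/M -/m !sumr_const -[_ *+ #|B|]mulr_natr -[_ *+ #|C|]mulr_natr alphaE.
move: N_gt0; rewrite -cardBC natrD => BC_gt0.
by apply/eqP; field; rewrite gt_eqF.
Qed.

Lemma sum_weight_pattern (o : option T) :
  \sum_(y in S k | if o is Some z then y == z else true) weight y <=
  if o is Some _ then nu S delta k else 1.
Proof.
case: o => [z|]; last by rewrite (eq_bigl [in S k]) ?sum_weight_le1 // => y; rewrite andbT.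
apply: (le_trans (y := \sum_(y | y == z) weight y)); last by rewrite big_pred1_eq weight_le_nu.
by apply: sumr_le_sub => [y /andP[]|y _]; last exact: weight_ge0.
Qed.

End Weight.

Section Cylinders.
Variables (R : realFieldType) (T : finType) (n : nat) (S : nat -> {set T})
  (Acal : {set n.-tuple (option T)}) (a : nat) (Pa : seq T -> R) (delta : nat -> R).
Hypothesis S_gt0 : forall j, (a < j <= n)%N -> (0 < #|S j|)%N.
Hypothesis delta_bounds : forall j, (a < j <= n)%N -> 0 <= delta j <= 1 / 2.
Hypothesis Pa_ge0 : forall x : a.-tuple T, inQ S a x -> 0 <= Pa x.

Local Notation P := (Paux S Acal delta Pa).

Let delta_le1 j : (a < j <= n)%N -> delta j <= 1.
Proof.
move/delta_bounds => /andP[_ /le_trans]; apply.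
by rewrite ler_pdivrMr ?mul1r ?ler1n.
Qed.

Lemma inQ_rcons m x y : inQ S m.+1 (rcons x y) = inQ S m x && (y \in S m.+1).
Proof.
rewrite /inQ; have -> : iota 1 m.+1 = rcons (iota 1 m) m.+1.
  by rewrite -cats1 -[m.+1]addn1 iotaD add1n addn1.
rewrite size_rcons eqSS; case: eqP => // xm.
by rewrite zip_rcons ?size_iota ?xm //= all_rcons andbC.
Qed.

Lemma inQ_size m x : inQ S m x -> size x = m.
Proof. by case/andP => /eqP. Qed.

Lemma inQ_nth m x i z : inQ S m x -> (i < m)%N -> nth z x i \in S i.+1.
Proof.
case/andP => /eqP xm /all_nthP Sx im.
move: (Sx (0%N, z) i); rewrite size_zip size_iota xm minnn => /(_ im).
by rewrite nth_zip ?size_iota ?xm //= nth_iota // add1n.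
Qed.

Lemma Paux_rcons d x y : P d.+1 (rcons x y) = weight S Acal delta (size x).+1 x y * P d x.
Proof. by case: x => [|x0 x] //=; rewrite belast_rcons last_rcons size_rcons. Qed.

Lemma Paux_ge0 d x : (d + a <= n)%N -> inQ S (d + a) x -> 0 <= P d x.
Proof.
elim: d x => [|d IH] x dn.
  by move=> xQ; apply: (@Pa_ge0 (Tuple (proj1 (andP xQ)))).
case/lastP: x => [|x y]; first by case/andP.
rewrite inQ_rcons Paux_rcons => /andP[xQ _]; rewrite mulr_ge0 ?IH ?(ltnW dn) //.
have dSn : (a < (d + a).+1 <= n)%N by rewrite dn ltnS leq_addl.
by rewrite (inQ_size xQ) weight_ge0 ?S_gt0 ?delta_bounds.
Qed.

Lemma cI_ge0 (I : {set 'I_a}) : 0 <= cI S Pa I.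
Proof. exact: bigmax_ge_id. Qed.

Lemma mass_cylinder_le_cI p :
  \sum_(x : a.-tuple T | inQ S a x && matches p x) Pa x <= cI S Pa [set i : 'I_a | p i != None].
Proof.
pose H : a.-tuple (option T) := [tuple p i | i < a].
have matchesE (x : a.-tuple T) : matches p x = inHyp H x.
  apply/allP/forallP => [px i|Hx i].
    rewrite tnth_mktuple; case pi: (p i) => [z|] //.
    move: (px i); rewrite mem_iota add0n size_tuple ltn_ord pi => /(_ isT) /eqP xi.
    by rewrite (onth_nth z) ?size_tuple // xi.
  rewrite mem_iota add0n size_tuple => ia; move: (Hx (Ordinal ia)); rewrite tnth_mktuple /=.
  by case: (p i) => [z|] //; rewrite (onth_nth z) ?size_tuple // => /eqP[->].
case Hhyp: (isHyp S H).
  apply: (@Order.TotalTheory.bigmax_sup _ _ _ _ H).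
    by rewrite Hhyp; apply/eqP/setP => i; rewrite !inE tnth_mktuple.
  by rewrite le_eqVlt; apply/orP; left; apply/eqP/eq_bigl => x; rewrite matchesE.
rewrite big1 ?cI_ge0 // => x /andP[xQ]; rewrite matchesE => /forallP Hx.
move/negbT: Hhyp => /forallPn[i]; rewrite tnth_mktuple; case pi: (p i) => [z|] //.
move: (Hx i); rewrite tnth_mktuple pi (onth_nth z) ?size_tuple // => /eqP[<-].
by rewrite (inQ_nth _ xQ).
Qed.

Lemma mass_cylinder_le d p : (d + a <= n)%N ->
  \sum_(x : (d + a).-tuple T | inQ S (d + a) x && matches p x) P d x <=
  keyw (cI S Pa) (fun j : 'I_d => nu S delta (j + a).+1) (pkey a d p).
Proof.
rewrite /keyw /= (eq_bigl (fun j : 'I_d => p (j + a)%N != None)) => [|j]; last by rewrite inE.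
elim: d => [|d IH] dn; first by rewrite big_ord0 mulr1 mass_cylinder_le_cI.
have dSn : (a < (d + a).+1 <= n)%N by rewrite dn ltnS leq_addl.
set g := if p (d + a)%N is Some _ then nu S delta (d + a).+1 else 1.
have step (t : (d + a).-tuple T) :
    \sum_y (if inQ S (d + a).+1 (rcons t y) && matches p (rcons t y)
            then P d.+1 (rcons t y) else 0) <=
    (if inQ S (d + a) t && matches p t then P d t * g else 0).
  rewrite (eq_bigr (fun y => if inQ S (d + a) t && matches p t then
      (if (y \in S (d + a).+1) && (if p (d + a)%N is Some z then y == z else true)
       then weight S Acal delta (d + a).+1 t y else 0) * P d t else 0)); last first.
    move=> y _; rewrite inQ_rcons matches_rcons Paux_rcons size_tuple.
    by case: (inQ _ _ t); case: (matches p t); case: (y \in _);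
      case: (if _ is Some _ then _ else _); rewrite ?mul0r.
  case: ifP => [/andP[tQ _]|_]; last by rewrite big1.
  rewrite -mulr_suml -big_mkcond mulrC ler_wpM2l ?Paux_ge0 ?(ltnW dn) //.
  by rewrite sum_weight_pattern ?S_gt0 ?delta_bounds.
rewrite addSn big_mkcond.
rewrite (sum_tuple_rcons _ (fun s => if inQ S (d + a).+1 s && matches p s then P d.+1 s else 0)).
apply: le_trans (ler_sum _ (fun t _ => step t)) _.
rewrite -big_mkcond /= -mulr_suml [in X in _ <= X]big_mkcond big_ord_recr /= -big_mkcond /=.
have -> : (if p (d + a)%N != None then nu S delta (d + a).+1 else 1) = g by rewrite /g; case: (p _).
rewrite mulrA ler_wpM2r ?IH ?(ltnW dn) // /g.
by case: (p _); rewrite ?ler01 // nu_ge0 ?delta_le1.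
Qed.

End Cylinders.

Section NewHyperplanes.
Variables (T : finType) (n : nat) (S : nat -> {set T}) (Acal : {set n.-tuple (option T)}).
Implicit Type A : n.-tuple (option T).

Lemma newk_above m A (i : 'I_n) : newk m.+1 A -> (m < i)%N -> tnth A i = None.
Proof.
case/andP => /forallP /(_ i) + _; rewrite inE ltnS => /implyP iA mi.
by apply/eqP; apply: contraTT mi => /iA; rewrite -leqNgt.
Qed.

Lemma newk_last m A : newk m.+1 A -> nth None A m != None.
Proof.
move=> Anew; case/andP: (Anew) => _ /forallPn[i]; rewrite negb_imply inE => /andP[iA im].
have -> : m = i.
  apply/eqP; rewrite eqn_leq leqNgt im leqNgt /=.
  by apply: contraNN iA => /(newk_above Anew)->.
by rewrite -tnth_nth.
Qed.

Lemma card_inB_le x :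
  (#|[set y in S (size x).+1 | inB Acal (size x).+1 (rcons x y)]| <=
   \sum_(A in Acal | newk (size x).+1 A) matches (nth None A) x)%N.
Proof.
rewrite -sum1_card big_mkcond /=.
apply: (@leq_trans (\sum_y \sum_(A in Acal | newk (size x).+1 A) inHyp A (rcons x y))).
  apply: leq_sum => y _; case: ifP => // /[!inE] /andP[_ /existsP[A /and3P[AAcal Anew Ay]]].
  by rewrite (bigD1 A) ?AAcal //= Ay.
rewrite exchange_big leq_sum // => A /andP[_ Anew].
case Az: (nth None A (size x)) (newk_last Anew) => [z|] // _.
have inHypE y : inHyp A (rcons x y) -> matches (nth None A) x && (y == z).
  by move/inHyp_matches; rewrite matches_rcons Az.
rewrite (bigD1 z) //= big1 ?addn0 => [|y yz].
  by case xz: (inHyp A (rcons x z)) => //; case/andP: (inHypE _ xz) => ->.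
case xy: (inHyp A (rcons x y)) => //.
by case/andP: (inHypE _ xy) => _ /eqP yz'; rewrite yz' eqxx in yz.
Qed.

Lemma newk_FixE m A (i : 'I_n) : newk m.+1 A ->
  (i \in Fix A) = ((i < m)%N && (nth None A i != None)) || (i == m :> nat).
Proof.
move=> Anew; rewrite inE (tnth_nth None).
have [_|mi|->] /= := ltngtP i m; [by rewrite orbF | | by rewrite newk_last].
by rewrite -(tnth_nth None) (newk_above Anew mi).
Qed.

End NewHyperplanes.

Section Moments.
Variables (R : realFieldType) (T : finType) (n : nat) (S : nat -> {set T})
  (Acal : {set n.-tuple (option T)}) (a : nat) (Pa : seq T -> R) (delta : nat -> R) (d : nat).
Hypothesis S_gt0 : forall j, (a < j <= n)%N -> (0 < #|S j|)%N.
Hypothesis delta_bounds : forall j, (a < j <= n)%N -> 0 <= delta j <= 1 / 2.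
Hypothesis Pa_ge0 : forall x : a.-tuple T, inQ S a x -> 0 <= Pa x.
Hypothesis dn : (d + a < n)%N.
Hypothesis Acal_inj : {in Acal &, forall A B, Fix A = Fix B -> A = B}.

Local Notation k := (d + a).+1.
Local Notation N := (#|S k|%:R : R).
Local Notation P := (Paux S Acal delta Pa d).
Local Notation w := (fun j : 'I_d => nu S delta (j + a).+1).
Local Notation kw := (keyw (cI S Pa (a := a)) w).
Local Notation key A := (pkey a d (nth None A)).
Local Notation isnew A := ((A \in Acal) && newk k A).
Local Notation K0 := (set0 : {set 'I_a}, set0 : {set 'I_d}).

Let k_range : (a < k <= n)%N. Proof. by rewrite dn ltnS leq_addl. Qed.
Let N_gt0 : 0 < N. Proof. by rewrite ltr0n S_gt0. Qed.

Lemma moment_le (I : finType) (Q : pred I) (pat : I -> nat -> option T) (f : seq T -> R) (c : R) :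
    0 < c ->
    (forall x : (d + a).-tuple T, inQ S (d + a) x ->
       f x <= (\sum_(i | Q i) (matches (pat i) x)%:R) / c) ->
  \sum_(x : (d + a).-tuple T | inQ S (d + a) x) P x * f x <=
    (\sum_(i | Q i) kw (pkey a d (pat i))) / c.
Proof.
move=> c_gt0 f_le.
have P_ge0 x : inQ S (d + a) x -> 0 <= P x by apply: Paux_ge0 => //; apply: ltnW.
apply: (le_trans (y := \sum_(x : (d + a).-tuple T | inQ S (d + a) x)
                          P x * ((\sum_(i | Q i) (matches (pat i) x)%:R) / c))).
  by apply: ler_sum => x xQ; rewrite ler_wpM2l ?P_ge0 ?f_le.
under eq_bigr => x _ do rewrite mulrA mulr_sumr.
rewrite -mulr_suml ler_pM2r ?invr_gt0 // exchange_big ler_sum // => i _.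
rewrite (eq_bigr (fun x : (d + a).-tuple T => if matches (pat i) x then P x else 0)).
  by rewrite -big_mkcondr mass_cylinder_le // ltnW.
by move=> x _; case: matches; rewrite ?mulr1 ?mulr0.
Qed.

Lemma alpha_le_matches (x : (d + a).-tuple T) :
  alpha S Acal R k x <= (\sum_(A | isnew A) (matches (nth None A) x)%:R) / N.
Proof.
rewrite /Defs.alpha ler_pM2r ?invr_gt0 // -natr_sum ler_nat.
by have := card_inB_le S Acal x; rewrite size_tuple.
Qed.

Lemma alpha_sq_le_matches (x : (d + a).-tuple T) :
  alpha S Acal R k x ^+ 2 <=
    (\sum_(AB | isnew AB.1 && isnew AB.2)
       (matches (pjoin (nth None AB.1) (nth None AB.2)) x)%:R) / N ^+ 2.
Proof.
have [al_ge0 _] := andP (alpha_ge0_le1 R Acal x (S_gt0 k_range)).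
apply: le_trans (ler_pM al_ge0 al_ge0 (alpha_le_matches x) (alpha_le_matches x)) _.
rewrite -expr2 expr_div_n ler_pM2r ?invr_gt0 ?exprn_gt0 // expr2 mulr_suml.
under eq_bigr => A _ do rewrite mulr_sumr.
rewrite pair_big /=; apply: ler_sum => -[A B] _ /=.
rewrite -natrM mulnb ler_nat; case: andP => // -[Ax Bx].
by rewrite matches_pjoin.
Qed.

Lemma M1_le_keys :
  M1 S Acal delta a Pa k <= (\sum_(A | isnew A) kw (key A)) / N.
Proof.
rewrite /M1 /Pk /= addnK.
exact: moment_le N_gt0 (fun x _ => alpha_le_matches x).
Qed.

Lemma M2_le_keys :
  M2 S Acal delta a Pa k <=
    (\sum_(AB | isnew AB.1 && isnew AB.2) kw (keyU (key AB.1) (key AB.2))) / N ^+ 2.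
Proof.
under eq_bigr => AB _ do rewrite -pkey_pjoin.
rewrite /M2 /Pk /= addnK.
have N2_gt0 : 0 < N ^+ 2 by rewrite exprn_gt0.
exact: (@moment_le _ _ _ (fun s => alpha S Acal R k s ^+ 2) _ N2_gt0
          (fun x _ => alpha_sq_le_matches x)).
Qed.

Lemma ck_shift x :
  ck S delta a Pa (d + a) x =
    \sum_(I : {set 'I_a}) cI S Pa I * x ^+ #|I| * \prod_(j < d) (1 + x * w j).
Proof.
apply: eq_bigr => I _; congr (_ * _).
rewrite -{1}[a.+1]add0n big_addn subSS addnK big_mkord.
by apply: eq_bigr => j _; rewrite addnS.
Qed.

Lemma keyw_ge0 K : 0 <= kw K.
Proof.
rewrite mulr_ge0 ?cI_ge0 // prodr_ge0 // => j _; apply: nu_ge0.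
have /delta_bounds/andP[_ /le_trans] : (a < (j + a).+1 <= n)%N.
  by rewrite ltnS leq_addl (leq_ltn_trans _ dn) // leq_add2r ltnW.
by apply; rewrite ler_pdivrMr ?mul1r ?ler1n.
Qed.

Lemma key_inj :
  {in [pred A | isnew A] &, injective (fun A : n.-tuple (option T) => key A)}.
Proof.
move=> A B /andP[AAcal Anew] /andP[BAcal Bnew] /= eq_key.
apply: Acal_inj => //; apply/setP => i; rewrite (newk_FixE i Anew) (newk_FixE i Bnew).
by case: ltnP => //= id; rewrite (pkey_fixedE eq_key).
Qed.

Lemma key_neq0 (A : n.-tuple (option T)) : newk k A -> #|Fix A| != 1%N -> key A != K0.
Proof.
move=> Anew; apply: contraNneq => eq_key.
have key_none : pkey a d (fun=> None : option T) = K0.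
  by congr pair; apply/setP => i; rewrite !inE.
have -> : Fix A = [set Ordinal dn].
  apply/setP => i; rewrite (newk_FixE i Anew) inE.
  case: ltnP => id /=; first by rewrite (pkey_fixedE (etrans eq_key (esym key_none))) // gtn_eqF.
  by apply/eqP/eqP => [e|->] //; apply: val_inj.
by rewrite cards1.
Qed.

Lemma sum_key_pairs_le (Q : pred ({set 'I_a} * {set 'I_d})) :
    (forall A, A \in Acal -> newk k A -> Q (key A)) ->
  \sum_(AB | isnew AB.1 && isnew AB.2) kw (keyU (key AB.1) (key AB.2)) <=
  \sum_(K1 | Q K1) \sum_(K2 | Q K2) kw (keyU K1 K2).
Proof.
move=> keyQ; rewrite pair_big /=.
pose keys (AB : n.-tuple (option T) * n.-tuple (option T)) := (key AB.1, key AB.2).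
apply: (sumr_le_inj (f := keys) (F := fun KK => kw (keyU KK.1 KK.2))).
- move=> [A1 B1] [A2 B2] /andP[/= A1D B1D] /andP[/= A2D B2D].
  rewrite /keys /= => /pair_equal_spec[eqA eqB].
  by rewrite (key_inj A1D A2D eqA) (key_inj B1D B2D eqB).
- by move=> [A B] /andP[/andP[AAcal Anew] /andP[BAcal Bnew]]; rewrite /= !keyQ.
- by move=> KK _; apply: keyw_ge0.
Qed.

Lemma ck1E : ck S delta a Pa (d + a) 1 = \sum_K kw K.
Proof.
rewrite ck_shift sum_keyw; apply: eq_bigr => I _; rewrite expr1n mulr1.
by congr (_ * _); apply: eq_bigr => j _; rewrite mul1r.
Qed.

Lemma ck3E : ck S delta a Pa (d + a) 3 = \sum_K1 \sum_K2 kw (keyU K1 K2).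
Proof. by rewrite ck_shift sum_keyw_keyU. Qed.

Lemma M1_le_ck : M1 S Acal delta a Pa k <= ck S delta a Pa (d + a) 1 / N.
Proof.
apply: le_trans M1_le_keys _; rewrite ler_wpM2r ?invr_ge0 // ck1E.
exact: sumr_le_inj key_inj _ (fun K _ => keyw_ge0 K).
Qed.

Lemma M2_le_ck : M2 S Acal delta a Pa k <= ck S delta a Pa (d + a) 3 / N ^+ 2.
Proof.
apply: le_trans M2_le_keys _; rewrite ler_wpM2r ?invr_ge0 ?exprn_ge0 // ck3E.
exact: (sum_key_pairs_le (Q := predT)).
Qed.

Hypothesis Pa_sum1 : \sum_(x : a.-tuple T | inQ S a x) Pa x = 1.

Lemma cI_le1 (I : {set 'I_a}) : cI S Pa I <= 1.
Proof.
apply: bigmax_le => [|H _]; first exact: ler01.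
by rewrite /PaH -Pa_sum1; apply: sumr_le_sub => [x /andP[]|x /Pa_ge0].
Qed.

Lemma M2_le_ck_Fix_neq1 : (forall A, A \in Acal -> newk k A -> #|Fix A| != 1%N) ->
  M2 S Acal delta a Pa k <=
    (ck S delta a Pa (d + a) 3 - 2 * ck S delta a Pa (d + a) 1 + 1) / N ^+ 2.
Proof.
move=> Fix_neq1; apply: le_trans M2_le_keys _; rewrite ler_wpM2r ?invr_ge0 ?exprn_ge0 //.
apply: le_trans (sum_key_pairs_le (Q := fun K => K != K0) _) _ => [A AAcal Anew|].
  exact: key_neq0 (Fix_neq1 A AAcal Anew).
rewrite sum_pairs_nonunit => [||[I J]]; last by rewrite /keyU /= !setU0.
  rewrite ck1E ck3E mulr_natl lerD2l /keyw big_set0 mulr1; exact: cI_le1.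
by case=> I J; rewrite /keyU /= !set0U.
Qed.

End Moments.

Theorem theorem3p2 (R : realFieldType) (T : finType) (n : nat)
  (S : nat -> {set T}) (Acal : {set n.-tuple (option T)})
  (a : nat) (Pa : seq T -> R) (delta : nat -> R) :
  (forall j, (1 <= j <= n)%N -> (2 <= #|S j|)%N) ->
  (forall A, A \in Acal -> isHyp S A) ->
  (forall A, A \in Acal -> Fix A != set0) ->
  {in Acal &, forall A B, Fix A = Fix B -> A = B} ->
  (a <= n)%N ->
  (forall x : a.-tuple T, inQ S a x -> 0 <= Pa x) ->
  \sum_(x : a.-tuple T | inQ S a x) Pa x = 1 ->
  (forall j, (a < j <= n)%N -> 0 <= delta j <= 1 / 2) ->
  forall k, (a < k <= n)%N ->
    [/\ M1 S Acal delta a Pa k <= ck S delta a Pa k.-1 1 / #|S k|%:R,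
        M2 S Acal delta a Pa k <= ck S delta a Pa k.-1 3 / (#|S k|%:R ^+ 2)
      & ((forall j, (1 <= j <= n)%N -> (3 <= #|S j|)%N) ->
         (forall A, A \in Acal -> newk k A -> #|Fix A| != 1%N) ->
         M2 S Acal delta a Pa k <=
           (ck S delta a Pa k.-1 3 - 2 * ck S delta a Pa k.-1 1 + 1) / (#|S k|%:R ^+ 2))].
Proof.
move=> S_ge2 _ _ Acal_inj _ Pa_ge0 Pa_sum1 delta_bounds k /andP[ak kn].
have S_gt0 j : (a < j <= n)%N -> (0 < #|S j|)%N.
  by case/andP => aj jn; apply: leq_trans (S_ge2 j _); rewrite // jn (leq_ltn_trans _ aj).
have [d kE] : exists d, k = (d + a).+1 by exists (k - a.+1)%N; rewrite -addnS subnK.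
subst k.
split; first exact: M1_le_ck S_gt0 delta_bounds Pa_ge0 kn Acal_inj.
  exact: M2_le_ck S_gt0 delta_bounds Pa_ge0 kn Acal_inj.
by move=> _; apply: M2_le_ck_Fix_neq1 S_gt0 delta_bounds Pa_ge0 kn Acal_inj Pa_sum1.
Qed.
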